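(* Let $\delta$ be a diagonal section and let $C$ be any bivariate copula with $C(t,t)=\delta(t)$ for all $t\in[0,1]$. Then for every $x,y\in[0,1]$, $$C(x,y)\le \min\left\{x,\;y,\;\max\{x,y\}-\frac12\left(\widehat{\delta}(x)+\widehat{\delta}(y)+\mathrm{TV}_{\min\{x,y\}}^{\max\{x,y\}}(\widehat{\delta})\right)\right\}.$$
   Context: $\mathbb{I}=[0,1]$. A (bivariate) copula is a function $C\colon\mathbb{I}^2\to\mathbb{I}$ with $C(x,0)=C(0,y)=0$, $C(x,1)=x$, $C(1,y)=y$ for all $x,y$, and $C(b,d)+C(a,c)-C(b,c)-C(a,d)\ge 0$ for all $a\le b$, $c\le d$ in $\mathbb{I}$. A diagonal section is a function $\delta\colon\mathbb{I}\to\mathbb{I}$ with $\delta(x)\le x$ for all $x$, $0\le\delta(y)-\delta(x)\le 2(y-x)$ whenever $x\le y$, and $\delta(1)=1$ (equivalently, $\delta$ is the diagonal $t\mapsto C(t,t)$ of some copula). Write $\widehat{\delta}(x)=x-\delta(x)$. For $f\colon\mathbb{I}\to\mathbb{R}$ and $0\le x\le y\le1$, $\mathrm{TV}_x^y(f)=\sup\{\sum_{i=1}^n|f(x_i)-f(x_{i-1})|: x=x_0<x_1<\dots<x_n=y\}$ is the total variation of $f$ on $[x,y]$. *)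

From HB Require Import structures.
From mathcomp Require Import all_boot all_order all_algebra.
From mathcomp Require Import all_classical all_reals.
From mathcomp Require Export ereal numfun realfun.
Set Implicit Arguments. Unset Strict Implicit. Unset Printing Implicit Defensive.
Import Order.TTheory GRing.Theory Num.Theory.
Local Open Scope ring_scope.

Definition inI {R : realType} (x : R) : Prop := 0 <= x <= 1.

(* A bivariate copula, given as a function R -> R -> R; only its values on I^2 matter. *)
Definition is_copula {R : realType} (C : R -> R -> R) : Prop :=
  [/\ (forall x y, inI x -> inI y -> inI (C x y)),
      (forall x, inI x -> C x 0 = 0 /\ C 0 x = 0),
      (forall x, inI x -> C x 1 = x /\ C 1 x = x) &
      (forall a b c d, inI a -> inI b -> inI c -> inI d -> a <= b -> c <= d ->
         0 <= C b d + C a c - C b c - C a d)].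

Definition is_diagonal_section {R : realType} (d : R -> R) : Prop :=
  [/\ (forall x, inI x -> inI (d x)),
      (forall x, inI x -> d x <= x),
      (forall x y, inI x -> inI y -> x <= y -> 0 <= d y - d x <= 2 * (y - x)) &
      d 1 = 1].

Definition dhat {R : realType} (d : R -> R) : R -> R := fun x => x - d x.

(* For a <= b, write hat-delta = P - Q on [a, b] with P t = t - C(a, t) and
   Q t = C(t, t) - C(a, t).  Both are nondecreasing by 2-increasingness of C,
   so TV_a^b(hat-delta) <= (P b - P a) + (Q b - Q a)
   = 2 b - 2 C(a, b) - hat-delta(a) - hat-delta(b), which rearranges to the
   third bound; the first two are the Frechet-Hoeffding upper bound. *)
From HB Require Import structures.
From mathcomp Require Import all_boot all_order all_algebra.
From mathcomp Require Import all_classical all_reals.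
From mathcomp Require Import ereal numfun realfun.
From mathcomp Require Import lra.
Set Implicit Arguments. Unset Strict Implicit.
Import Order.TTheory GRing.Theory Num.Theory.
Local Open Scope ring_scope.

Lemma total_variation_sub_le (R : realType) (a b : R) (f g : R -> R) :
  a <= b ->
  {in `[a, b] &, nondecreasing_fun f} -> {in `[a, b] &, nondecreasing_fun g} ->
  (total_variation a b (f \- g)%R <= (f b - f a + (g b - g a))%:E)%E.
Proof.
move=> ab ndf ndg.
apply: (le_trans (total_variation_le f (\- g)%R ab)).
by rewrite total_variationN !nondecreasing_total_variation.
Qed.

Lemma inI0 (R : realType) : inI (0 : R).
Proof. by rewrite /inI lexx ler01. Qed.

Lemma inI1 (R : realType) : inI (1 : R).
Proof. by rewrite /inI ler01 lexx. Qed.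

Lemma inI_itv (R : realType) (a b s : R) :
  inI a -> inI b -> s \in `[a, b] -> inI s.
Proof.
rewrite /inI in_itv /= => /andP[a0 _] /andP[_ b1] /andP[as_ sb].
by rewrite (le_trans a0 as_) (le_trans sb b1).
Qed.

Lemma copula_transpose (R : realType) (C : R -> R -> R) :
  is_copula C -> is_copula (fun x y => C y x).
Proof.
case=> CI C0 C1 C2inc; split.
- by move=> x y xI yI; apply: CI.
- by move=> x xI; have [? ?] := C0 x xI.
- by move=> x xI; have [? ?] := C1 x xI.
- move=> a b c e aI bI cI eI ab ce.
  have := C2inc c e a b cI eI aI bI ce ab; lra.
Qed.

Section copula_bounds.
Variables (R : realType) (C : R -> R -> R).
Hypothesis copC : is_copula C.

Lemma copula_le_r x y : inI x -> inI y -> C x y <= y.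
Proof.
move=> xI yI; have [_ C0 C1 C2inc] := copC.
have := C2inc x 1 0 y xI (inI1 R) (inI0 R) yI (proj2 (andP xI)) (proj1 (andP yI)).
by rewrite (C1 y yI).2 (C0 x xI).1 (C0 1 (inI1 R)).1; lra.
Qed.

Lemma copula_row_sub_le a s t :
  inI a -> inI s -> inI t -> s <= t -> C a t - C a s <= t - s.
Proof.
move=> aI sI tI st; have [_ _ C1 C2inc] := copC.
have := C2inc a 1 s t aI (inI1 R) sI tI (proj2 (andP aI)) st.
by rewrite (C1 s sI).2 (C1 t tI).2; lra.
Qed.

Lemma copula_row_sub_le_diag_sub a s t :
  inI a -> inI s -> inI t -> a <= s -> s <= t ->
  C a t - C a s <= C t t - C s s.
Proof.
move=> aI sI tI as_ st; have [_ C0 _ C2inc] := copC.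
have rect_ast := C2inc a t s t aI tI sI tI (le_trans as_ st) st.
have := C2inc s t 0 s sI tI (inI0 R) sI st (proj1 (andP sI)).
by rewrite (C0 s sI).1 (C0 t tI).1; lra.
Qed.

Variable d : R -> R.
Hypothesis diagC : forall t, inI t -> C t t = d t.

Lemma copula_total_variation_dhat_le a b :
  inI a -> inI b -> a <= b ->
  (total_variation a b (dhat d)
     <= (2 * b - 2 * C a b - dhat d a - dhat d b)%:E)%E.
Proof.
move=> aI bI ab.
pose P t := t - C a t.
have -> : dhat d = (P \- (P \- dhat d))%R by apply/funext => t /=; lra.
apply: (le_trans (@total_variation_sub_le _ _ _ P (P \- dhat d)%R ab _ _)).
- move=> s t sab tab st.
  have := copula_row_sub_le aI (inI_itv aI bI sab) (inI_itv aI bI tab) st.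
  by rewrite /P; lra.
- move=> s t sab tab st /=.
  have as_ : a <= s by move: sab; rewrite in_itv => /andP[].
  have sI := inI_itv aI bI sab; have tI := inI_itv aI bI tab.
  have := copula_row_sub_le_diag_sub aI sI tI as_ st.
  by rewrite /P /dhat -(diagC sI) -(diagC tI); lra.
- by rewrite lee_fin /P /dhat /= -(diagC aI); lra.
Qed.

Lemma copula_le_sub_total_variation a b :
  inI a -> inI b -> a <= b ->
  ((C a b)%:E <= b%:E - (2^-1)%:E *
     ((dhat d a)%:E + (dhat d b)%:E + total_variation a b (dhat d)))%E.
Proof.
move=> aI bI ab.
have tv_le := copula_total_variation_dhat_le aI bI ab.
have /fineK tvE : total_variation a b (dhat d) \is a fin_num.
  by rewrite ge0_fin_numE ?total_variation_ge0 // (le_lt_trans tv_le) ?ltry.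
move: tv_le; rewrite -tvE -!EFinD !lee_fin.
by move: (fine _) => tv; lra.
Qed.

End copula_bounds.

Lemma copula_le_l (R : realType) (C : R -> R -> R) x y :
  is_copula C -> inI x -> inI y -> C x y <= x.
Proof. by move=> copC xI yI; apply: (copula_le_r (copula_transpose copC)). Qed.

Theorem proposition3p1 (R : realType) (d : R -> R) (C : R -> R -> R) :
  is_diagonal_section d -> is_copula C ->
  (forall t, inI t -> C t t = d t) ->
  forall x y, inI x -> inI y ->
  ((C x y)%:E <= Order.min (Order.min x%:E y%:E)
     ((Order.max x y)%:E - (2^-1)%:E *
        ((dhat d x)%:E + (dhat d y)%:E +
         total_variation (Order.min x y) (Order.max x y) (dhat d))))%E.
Proof.
move=> _ copC diagC x y xI yI.
rewrite !le_min !lee_fin copula_le_l ?copula_le_r //=.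
have [xy|/ltW yx] := leP x y.
- exact (copula_le_sub_total_variation copC diagC xI yI xy).
- rewrite (addeC (dhat d x)%:E).
  exact (copula_le_sub_total_variation (copula_transpose copC) diagC yI xI yx).
Qed.
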